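(* Consider the universal Dealer $\mathcal D_{\mathrm{universal}}$ with parameters $k_i$, $\ell_i$, $u_i$, $d$ as below. For every epoch $i\in[d]$, the expected number of correct guesses that any Guesser makes during the $i$-th epoch is at most $\ln(\log n+3)$.
   Context: Card guessing game: a deck of $n$ distinct cards labeled $1,\dots,n$; $n$ turns; in each turn the Dealer selects a card from the remaining deck and places it face down, the Guesser names a card of $[n]$, and the card is revealed and discarded. A guess is correct if it equals the drawn card. The Guesser may be arbitrary (any memory, randomness and computation). The universal Dealer (rounding ignored): let $d=\log_{\log n}\big(n/(8e\log^6 n)\big)$, and for $i\in[d]$ let $k_i=n/(8e\log^{1+i} n)$, $\ell_i=k_i(1-1/\log n)$, $u_i=2\ell_i/\log^2 n$. (1) While more than $k_1$ cards remain it draws uniformly random cards from the remaining deck; (2) the $i$-th epoch consists of the $\ell_i$ turns starting when $k_i$ cards remain; at the start of each epoch a set $B$ is set to $\emptyset$; in each turn of the epoch the Dealer draws a uniformly random card of (remaining deck)$\setminus B$, and after the Guesser's guess $g$, if $g$ is still in the remaining deck and $|B|<u_i$, then $g$ is added to $B$; (3) when $\log^4 n$ cards remain it draws uniformly random cards from the remaining deck until the end. Expectations are over the randomness of both players. $\log$ is base 2, $\ln$ natural. *)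

From HB Require Import structures.
From mathcomp Require Import all_boot all_order all_algebra.
From mathcomp Require Import all_classical all_reals all_analysis.
Set Implicit Arguments. Unset Strict Implicit. Unset Printing Implicit Defensive.
Import Order.TTheory GRing.Theory Num.Theory.
Local Open Scope ring_scope.

Section UniversalDealer.
Variable R : realType.
Variable n : nat.

Definition lg : R := ln (n%:R : R) / ln 2.
Definition eR : R := expR 1.

Definition d_real : R := ln ((n%:R : R) / (8 * eR * lg ^+ 6)) / ln lg.
Definition k_real (i : nat) : R := (n%:R : R) / (8 * eR * lg ^+ (1 + i)).
Definition l_real (i : nat) : R := k_real i * (1 - lg^-1).
Definition u_real (i : nat) : R := 2 * l_real i / lg ^+ 2.

(* integer versions: rounding = floor (truncation of nonneg reals) *)
Definition dN : nat := Num.truncn d_real.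
Definition kN (i : nat) : nat := Num.truncn (k_real i).
Definition lN (i : nat) : nat := Num.truncn (l_real i).
Definition uN (i : nat) : nat := Num.truncn (u_real i).

(* r cards remaining at the start of a turn: the turn belongs to epoch j
   iff it is one of the l_j turns starting when k_j cards remain *)
Definition in_epoch (r j : nat) : bool :=
  [&& (1 <= j)%N, (j <= dN)%N, (kN j - lN j < r)%N & (r <= kN j)%N].

Definition epoch_at (r : nat) : option nat :=
  ohead [seq j <- iota 1 dN | in_epoch r j].

(* A (behavioural, hence arbitrary randomized with full memory) Guesser:
   given the history of (guess, revealed card) pairs, a probability
   distribution over the guess in [n]. *)
Definition guesser := seq ('I_n * 'I_n) -> 'I_n -> R.

Definition is_guesser (G : guesser) : Prop :=
  (forall h g, 0 <= G h g) /\ (forall h, \sum_(g : 'I_n) G h g = 1).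

(* Expected number of correct guesses made during epoch i, in the
   remaining [fuel] turns, from state (deck, B, history h), when the
   universal Dealer plays against G.  Outside of epochs (phases (1), (3))
   the dealer draws uniformly from the remaining deck. *)
Fixpoint play (G : guesser) (i fuel : nat) (deck B : {set 'I_n})
    (h : seq ('I_n * 'I_n)) : R :=
  match fuel with
  | 0 => 0
  | f.+1 =>
    let r := #|deck| in
    let ep := epoch_at r in
    let B0 := if ep is Some j then (if r == kN j then (finset.set0 : {set 'I_n}) else B) else (finset.set0 : {set 'I_n}) in
    let S := deck :\: B0 in
    \sum_(c in S) \sum_(g : 'I_n)
      ((#|S|%:R)^-1 * G h g) *
      ((if (ep == Some i) && (g == c) then 1 else 0) +
       play G i f (deck :\ c)
         (if ep is Some j then
            (if (g \in deck :\ c) && (#|B0| < uN j)%N then g |: B0 else B0)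
          else (finset.set0 : {set 'I_n}))
         (rcons h (g, c)))
  end.

Definition expected_correct_in_epoch (G : guesser) (i : nat) : R :=
  play G i n [set: 'I_n] (finset.set0 : {set 'I_n}) [::].

End UniversalDealer.

(* During epoch i the blocked set B starts empty and never exceeds u_i cards, so
   on a turn with r cards left the drawn card is uniform over at least r - u_i
   cards and a guess is correct with probability at most
   1/(r - u_i) <= ln(r - u_i) - ln(r - 1 - u_i).  Hence the potential
   ln(clamp r - u_i) - ln(k_i - l_i - u_i), where clamp r is r clamped to the
   window [k_i - l_i, k_i] of epoch i, bounds the expected number of correct
   guesses still to come in epoch i at every node of the game tree.  At the root
   it equals ln((k_i - u_i) / (k_i - l_i - u_i)), and since k_i >= log^5 n and
   log n >= 7 whenever epoch i exists, the choice l_i = k_i (1 - 1/log n),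
   u_i = 2 l_i / log^2 n makes this ratio at most log n + 3. *)

From HB Require Import structures.
From mathcomp Require Import all_boot all_order all_algebra.
From mathcomp Require Import all_classical all_reals all_analysis.
From mathcomp Require Import ring lra zify.
Set Implicit Arguments. Unset Strict Implicit. Unset Printing Implicit Defensive.
Import Order.TTheory GRing.Theory Num.Theory.
Local Open Scope ring_scope.

Lemma ler_ln_nat (R : realType) (a b : nat) : (0 < a)%N -> (a <= b)%N ->
  ln (a%:R : R) <= ln b%:R.
Proof. by move=> a0 ab; rewrite ler_ln ?posrE ?ltr0n ?ler_nat // (leq_trans a0). Qed.

Lemma invn_le_ln_diff (R : realType) (m : nat) : (1 < m)%N ->
  (m%:R : R)^-1 <= ln m%:R - ln m.-1%:R.
Proof.
move=> m1.
have m0 : (0 : R) < m%:R by rewrite ltr0n (ltn_trans _ m1).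
have m'0 : (0 : R) < m.-1%:R by rewrite ltr0n -ltnS prednK // ltnW.
have -> : (m.-1%:R : R) = m%:R * (1 - (m%:R)^-1).
  by rewrite mulrBr mulr1 mulfV ?gt_eqF // -subn1 natrB // ltnW.
rewrite lnM ?posrE // ?subr_gt0 ?invf_lt1 ?ltr1n //.
have := @le_ln1Dx R (- (m%:R)^-1); rewrite ltrNl opprK invf_lt1 // ltr1n => /(_ m1).
lra.
Qed.

Lemma uniform_draw_le (R : realType) (T : finType) (S : {set T}) (p : T -> R)
    (t : bool) (P : T -> T -> R) (b : R) :
  (forall g, 0 <= p g) -> \sum_g p g = 1 -> 0 <= b ->
  (forall c g, c \in S -> P c g <= b) ->
  \sum_(c in S) \sum_g (#|S|%:R^-1 * p g) * ((if t && (g == c) then 1 else 0) + P c g)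
    <= (if t then #|S|%:R^-1 else 0) + b.
Proof.
move=> p_ge0 p_sum1 b_ge0 P_le.
have [S0|Sn0] := eqVneq #|S| 0%N.
  by rewrite (cards0_eq S0) big_set0 cards0 invr0 if_same add0r.
have w0 g : 0 <= #|S|%:R^-1 * p g by rewrite mulr_ge0 ?invr_ge0 ?ler0n.
have hit : \sum_(c in S) \sum_g (#|S|%:R^-1 * p g) * (if t && (g == c) then 1 else 0)
    <= (if t then #|S|%:R^-1 else 0).
  case: t; last by rewrite big1 // => c _; rewrite big1 // => g _; rewrite mulr0.
  under eq_bigr => c _.
    rewrite (bigD1 c) //= eqxx mulr1 big1 ?addr0; last first.
      by move=> g /negbTE ->; rewrite mulr0.
    over.
  rewrite -mulr_sumr ler_piMr ?invr_ge0 // -p_sum1 [leRHS](bigID (mem S)) /= lerDl.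
  exact: sumr_ge0.
have miss : \sum_(c in S) \sum_g (#|S|%:R^-1 * p g) * P c g <= b.
  apply: (@le_trans _ _ (\sum_(c in S) \sum_g (#|S|%:R^-1 * p g) * b)).
    by apply: ler_sum => c cS; apply: ler_sum => g _; rewrite ler_wpM2l ?P_le.
  under eq_bigr do rewrite -mulr_suml -mulr_sumr p_sum1 mulr1.
  by rewrite sumr_const -mulrnAl -mulr_natr mulVf ?mul1r ?pnatr_eq0.
under eq_bigr do rewrite (eq_bigr _ (fun g _ => mulrDr _ _ _)) big_split /=.
by rewrite big_split /= lerD.
Qed.

Lemma card_capped_setU1 (T : finType) (B : {set T}) (x : T) (b : bool) (u : nat) :
  (#|B| <= u)%N -> (#|if b && (#|B| < u)%N then x |: B else B| <= u)%N.
Proof.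
case: ifP => // /andP[_ Bu] _.
by rewrite cardsU1 (leq_trans (leq_add (leq_b1 _) (leqnn _))) // add1n.
Qed.

Lemma ln_sub_le (R : realType) (a b c : R) : 0 < a -> 0 < b -> a <= c * b ->
  ln a - ln b <= ln c.
Proof.
move=> a_gt0 b_gt0 a_le.
have c_gt0 : 0 < c by rewrite -(pmulr_lgt0 _ b_gt0) (lt_le_trans a_gt0).
by rewrite lerBlDr -lnM ?posrE // ler_ln ?posrE ?mulr_gt0.
Qed.

Section EpochPotential.
Variables (R : realType) (K L U : nat).

Definition epoch_clamp (r : nat) : nat := minn (maxn r (K - L)) K.

Definition epoch_potential (r : nat) : R :=
  ln (epoch_clamp r - U)%:R - ln (K - L - U)%:R.

Hypothesis U_lt_window : (U < K - L)%N.

Lemma epoch_clamp_ge r : (K - L <= epoch_clamp r <= K)%N.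
Proof. by rewrite leq_min geq_minr leq_maxr leq_subr. Qed.

Lemma epoch_clamp_sub_gt0 r : (0 < epoch_clamp r - U)%N.
Proof. by have /andP[+ _] := epoch_clamp_ge r; lia. Qed.

Lemma epoch_potential_ge0 r : 0 <= epoch_potential r.
Proof.
rewrite subr_ge0 ler_ln_nat ?subn_gt0 // leq_sub2r //.
by have /andP[] := epoch_clamp_ge r.
Qed.

Lemma epoch_potential_pred r : epoch_potential r.-1 <= epoch_potential r.
Proof.
by rewrite lerD2r ler_ln_nat ?epoch_clamp_sub_gt0 //; rewrite /epoch_clamp; lia.
Qed.

Lemma epoch_potential_turn r : (K - L < r <= K)%N ->
  ((r - U)%:R)^-1 + epoch_potential r.-1 <= epoch_potential r.
Proof.
move=> r_in; rewrite /epoch_potential.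
have [-> ->] : epoch_clamp r = r /\ epoch_clamp r.-1 = r.-1 by rewrite /epoch_clamp; lia.
have -> : (r.-1 - U = (r - U).-1)%N by lia.
by rewrite addrA lerD2r -lerBrDr invn_le_ln_diff //; lia.
Qed.

Lemma epoch_potential_le r : epoch_potential r <= ln (K - U)%:R - ln (K - L - U)%:R.
Proof.
rewrite lerD2r ler_ln_nat ?epoch_clamp_sub_gt0 // leq_sub2r //.
by have /andP[] := epoch_clamp_ge r.
Qed.

End EpochPotential.

Section EpochParameters.
Variable R : realType.

Lemma lg_ge_nat n c : (2 ^ c <= n)%N -> (c%:R : R) <= lg R n.
Proof.
move=> n_ge; have ln2_gt0 : (0 : R) < ln 2 by rewrite ln_gt0 // ltr1n.
rewrite /lg ler_pdivlMr // mulr_natl -lnXn // ler_ln ?posrE ?exprn_gt0 //.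
  by rewrite -natrX ler_nat.
by rewrite ltr0n (leq_trans _ n_ge) // expn_gt0.
Qed.

(* For n <= 1 we get lg = 0, whose logarithm is 0 by convention; this makes
   d = 0, so a nonempty set of epochs forces lg > 1. *)
Lemma lg_gt1_of_dN n : (0 < dN R n)%N -> 1 < lg R n.
Proof.
rewrite truncn_gt0 => d_ge1; rewrite ltNge; apply/negP => lg_le1.
suff ln_lg0 : ln (lg R n) = 0 by move: d_ge1; rewrite /d_real ln_lg0 invr0 mulr0 ler10.
have [n_le1|n_gt1] := leqP n 1.
  have -> : lg R n = 0.
    case: n n_le1 {d_ge1 lg_le1} => [|[|]] // _; rewrite /lg.
      by rewrite ln0 ?mul0r.
    by rewrite ln1 mul0r.
  by rewrite ln0.
have lg_ge1 : 1 <= lg R n by have := @lg_ge_nat n 1; rewrite expn1; apply.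
by rewrite (@le_anti _ _ (lg R n) 1) ?lg_le1 ?lg_ge1 ?ln1.
Qed.

Lemma n_ge_epoch_scale n i : (1 <= i <= dN R n)%N -> 8 * eR R * lg R n ^+ (6 + i) <= n%:R.
Proof.
move=> /andP[i_ge1 i_le]; have lg_gt1 := lg_gt1_of_dN (leq_trans i_ge1 i_le).
have lg_gt0 : 0 < lg R n := lt_trans ltr01 lg_gt1.
have c_gt0 : 0 < 8 * eR R * lg R n ^+ 6.
  by rewrite mulr_gt0 ?exprn_gt0 // mulr_gt0 // expR_gt0.
have d_ge0 : 0 <= d_real R n.
  by apply: le_trans ler01 _; rewrite -truncn_gt0 (leq_trans i_ge1).
have : i%:R <= d_real R n by rewrite -truncn_ge_nat.
set x := n%:R / (8 * eR R * lg R n ^+ 6).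
rewrite /d_real -/x ler_pdivlMr ?ln_gt0 // => ln_x.
have x_gt0 : 0 < x.
  rewrite ltNge; apply/negP => /ln0 ln_x0; move: ln_x; rewrite ln_x0 leNgt.
  by rewrite mulr_gt0 ?ltr0n ?ln_gt0.
have : lg R n ^+ i <= x.
  by rewrite -ler_ln ?posrE ?exprn_gt0 // lnXn // -mulr_natl.
by rewrite /x ler_pdivlMr // mulrC exprD mulrA.
Qed.

Lemma epoch_lg_bounds n i : (1 <= i <= dN R n)%N ->
  7 <= lg R n /\ lg R n ^+ 5 <= k_real R n i.
Proof.
move=> Hi; have n_ge := n_ge_epoch_scale Hi.
have /andP[i_ge1 i_le] := Hi.
have lg_gt1 := lg_gt1_of_dN (leq_trans i_ge1 i_le).
have lg_gt0 : 0 < lg R n := lt_trans ltr01 lg_gt1.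
have lg_ge1 := ltW lg_gt1.
have e_ge2 : 2 <= eR R by have := expR_ge1Dx (1 : R).
have n_ge7 : 16 * lg R n ^+ 7 <= n%:R.
  apply: le_trans n_ge; apply: ler_pM; rewrite ?exprn_ge0 ?(ler_weXn2l lg_ge1) //; lra.
have lg7_ge1 : 1 <= lg R n ^+ 7 by rewrite exprn_ege1.
have lg_ge4 : 4 <= lg R n.
  by apply: lg_ge_nat; rewrite -(ler_nat R) natrX; apply: le_trans n_ge7; lra.
have lg7_ge8 : 8 <= lg R n ^+ 7.
  apply: le_trans (ler_weXn2l lg_ge1 (isT : (2 <= 7)%N)); rewrite expr2; nra.
split.
  by apply: lg_ge_nat; rewrite -(ler_nat R) natrX; apply: le_trans n_ge7; lra.
rewrite /k_real ler_pdivlMr; last by rewrite mulr_gt0 ?exprn_gt0 // mulr_gt0 // expR_gt0.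
by rewrite mulrCA -exprD addnA.
Qed.

End EpochParameters.

Section EpochLengths.
Variables (R : realType) (la k l u : R).

(* With c := k / la^3 >= la^2 we have l = c la^3 - c la^2 and u = 2 c la - 2 c,
   and both inequalities become polynomial in c and la. *)
Lemma epoch_real_bounds : 7 <= la -> la ^+ 5 <= k ->
  l = k * (1 - la^-1) -> u = 2 * l / la ^+ 2 ->
  u + l + 1 <= k /\ k <= (la + 3) * (k - 1 - l - u).
Proof.
move=> la_ge7 k_ge l_def u_def.
have la0 : la != 0 by rewrite gt_eqF // (lt_le_trans _ la_ge7).
pose c := k / la ^+ 3.
have kc : k = c * la ^+ 3 by rewrite /c divfK // expf_neq0.
have c_ge : la ^+ 2 <= c.
  by rewrite /c ler_pdivlMr ?exprn_gt0 -?exprD // (lt_le_trans _ la_ge7).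
have le : l = c * la ^+ 3 - c * la ^+ 2 by rewrite l_def kc; field.
have ue : u = 2 * c * la - 2 * c by rewrite u_def le; field.
rewrite ue le kc; clear l_def u_def le ue kc k_ge.
have c_ge49 : 49 <= c by apply: le_trans c_ge; rewrite expr2; nra.
clearbody c.
have h1 : 0 <= c * (la * (la - 2)) by rewrite !mulr_ge0 //; lra.
have h2 : 0 <= (c - 1) * (la * (la - 4) + 6) by rewrite mulr_ge0 //; nra.
have h3 : 0 <= la * (la - 5) by rewrite mulr_ge0 //; lra.
split; rewrite !exprS expr0 !mulr1; nra.
Qed.

Lemma epoch_truncn_bounds : 7 <= la -> la ^+ 5 <= k ->
  l = k * (1 - la^-1) -> u = 2 * l / la ^+ 2 ->
  (Num.truncn u < Num.truncn k - Num.truncn l)%N /\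
  ((Num.truncn k - Num.truncn u)%:R
     <= (la + 3) * (Num.truncn k - Num.truncn l - Num.truncn u)%:R).
Proof.
move=> la_ge7 k_ge l_def u_def.
have [ulk k_le] := epoch_real_bounds la_ge7 k_ge l_def u_def.
have la_gt0 : 0 < la by apply: lt_le_trans la_ge7.
have k_ge0 : 0 <= k by apply: le_trans k_ge; rewrite exprn_ge0 ?(ltW la_gt0).
have l_ge0 : 0 <= l by rewrite l_def mulr_ge0 // subr_ge0 invf_le1 //; lra.
have u_ge0 : 0 <= u.
  by rewrite u_def; apply: divr_ge0; [exact: mulr_ge0 | exact/exprn_ge0/ltW].
clear l_def u_def k_ge.
have K_le : (Num.truncn k)%:R <= k by rewrite truncn_le.
have K_gt : k < (Num.truncn k)%:R + 1 by rewrite natr1 truncnS_gt.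
have L_le : (Num.truncn l)%:R <= l by rewrite truncn_le.
have U_le : (Num.truncn u)%:R <= u by rewrite truncn_le.
have U_lt : (Num.truncn u < Num.truncn k - Num.truncn l)%N.
  by rewrite ltn_subRL addnC -addn1 truncn_ge_nat // !natrD; lra.
split => //; rewrite !natrB; try by clear -U_lt; lia.
have : 0 <= (la + 3) * ((Num.truncn k)%:R - (Num.truncn l)%:R - (Num.truncn u)%:R
                        - (k - 1 - l - u)) by rewrite mulr_ge0 //; lra.
have := ler0n R (Num.truncn u); lra.
Qed.

End EpochLengths.

Section EpochWindows.
Variables (R : realType) (n : nat).
Hypothesis lg_ge1 : 1 <= lg R n.

Let lg_gt0 : 0 < lg R n := lt_le_trans ltr01 lg_ge1.

Lemma k_real_ge0 j : 0 <= k_real R n j.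
Proof. by rewrite divr_ge0 // !mulr_ge0 ?exprn_ge0 ?expR_ge0 // ltW. Qed.

Lemma l_real_ge0 j : 0 <= l_real R n j.
Proof. by rewrite mulr_ge0 ?k_real_ge0 // subr_ge0 invf_le1. Qed.

Lemma k_real_succ j : k_real R n j.+1 + l_real R n j = k_real R n j.
Proof.
have e0 : eR R != 0 by rewrite gt_eqF // expR_gt0.
by rewrite /l_real /k_real addnS exprSr; field; rewrite e0 expf_neq0 ?gt_eqF.
Qed.

Lemma kN_succ j : (kN R n j.+1 + lN R n j <= kN R n j)%N.
Proof.
rewrite /kN /lN truncn_ge_nat ?k_real_ge0 // natrD -(k_real_succ j).
by rewrite lerD // truncn_le ?k_real_ge0 ?l_real_ge0.
Qed.

Lemma kN_antimono j j' : (j <= j')%N -> (kN R n j' <= kN R n j)%N.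
Proof.
move=> jj'; apply: le_truncn.
rewrite ler_wpM2l // lef_pV2 ?posrE ?mulr_gt0 ?exprn_gt0 ?expR_gt0 //.
by rewrite ler_wpM2l ?ler_weXn2l ?mulr_ge0 ?expR_ge0.
Qed.

(* The windows of the epochs j < i lie strictly above that of epoch i, so i is
   the first listed epoch whose window contains r. *)
Lemma epoch_at_window i r : (1 <= i <= dN R n)%N ->
  (kN R n i - lN R n i < r <= kN R n i)%N -> epoch_at R n r = Some i.
Proof.
move=> /andP[i1 id] r_in; rewrite /epoch_at.
have -> : dN R n = (i.-1 + (dN R n - i).+1)%N by lia.
rewrite iotaD filter_cat /=.
have -> : (1 + i.-1 = i)%N by lia.
have -> : [seq j <- iota 1 i.-1 | in_epoch R n r j] = [::].
  apply/eqP; rewrite -[_ == _]negbK -has_filter; apply/hasPn => j.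
  rewrite mem_iota => j_lt; apply/negP => /and4P[_ _ rj _].
  have := kN_succ j; have := @kN_antimono j.+1 i; lia.
by rewrite /in_epoch i1 id r_in.
Qed.

End EpochWindows.

Lemma in_epoch_of_epoch_at (R : realType) n r j :
  epoch_at R n r = Some j -> in_epoch R n r j.
Proof.
rewrite /epoch_at; case E: [seq j <- _ | _] => [|x s] //= [<-].
by have := mem_head x s; rewrite -E mem_filter => /andP[].
Qed.

Section PlayBound.
Variables (R : realType) (n : nat) (G : guesser R n) (i : nat).
Hypothesis G_guesser : is_guesser G.

Local Notation K := (kN R n i).
Local Notation L := (lN R n i).
Local Notation U := (uN R n i).
Local Notation Phi := (epoch_potential R K L U).

Hypothesis U_lt_window : (U < K - L)%N.
Hypothesis epoch_at_window_i :
  forall r, (K - L < r <= K)%N -> epoch_at R n r = Some i.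

(* Strict at [K]: the first turn of the epoch resets [B]. *)
Definition blocked_inv (r : nat) (B : {set 'I_n}) : Prop :=
  (K - L < r < K)%N -> (#|B| <= U)%N.

Lemma blocked_reset_card r (B : {set 'I_n}) : (K - L < r <= K)%N ->
  blocked_inv r B -> (#|if r == K then finset.set0 else B| <= U)%N.
Proof.
move=> r_in inv; case: eqP => [_|r_neq]; first by rewrite cards0.
by apply: inv; lia.
Qed.

Lemma play_le_potential f (deck B : {set 'I_n}) h :
  blocked_inv #|deck| B -> play G i f deck B h <= Phi #|deck|.
Proof.
have [G_ge0 G_sum1] := G_guesser.
elim: f deck B h => [|f IH] deck B h inv; first exact: epoch_potential_ge0.
rewrite [play _ _ _ _ _ _]/=; set r := #|deck| in inv *.
have IH_draw c g B' : c \in deck -> blocked_inv r.-1 B' ->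
    play G i f (deck :\ c) B' (rcons h (g, c)) <= Phi r.-1.
  by move=> c_in; rewrite /r (cardsD1 c deck) c_in; apply: IH.
case E: (epoch_at R n r) => [j|]; last first.
  apply: le_trans (uniform_draw_le (None == Some i) (S := deck :\: finset.set0)
    (P := fun c g => play G i f (deck :\ c) finset.set0 (rcons h (g, c)))
    (G_ge0 h) (G_sum1 h) (epoch_potential_ge0 R U_lt_window r.-1) _) _.
    by move=> c g /setDP[c_in _]; apply: IH_draw => // _; rewrite cards0.
  by rewrite add0r epoch_potential_pred.
set B0 := if r == kN R n j then finset.set0 else B.
apply: le_trans (uniform_draw_le (Some j == Some i) (S := deck :\: B0)
  (P := fun c g => play G i f (deck :\ c)
    (if (g \in deck :\ c) && (#|B0| < uN R n j)%N then g |: B0 else B0)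
    (rcons h (g, c)))
  (G_ge0 h) (G_sum1 h) (epoch_potential_ge0 R U_lt_window r.-1) _) _.
  move=> c g /setDP[c_in _]; apply: IH_draw => // r'_in.
  have r_in : (K - L < r <= K)%N by lia.
  move: E; rewrite /B0 epoch_at_window_i // => -[<-].
  by apply: card_capped_setU1; apply: blocked_reset_card.
case: eqP => [[ji]|_]; last by rewrite add0r epoch_potential_pred.
subst j.
have /and4P[_ _ r_gt r_le] := in_epoch_of_epoch_at E.
have r_in : (K - L < r <= K)%N by rewrite r_gt r_le.
have B0_le : (#|B0| <= U)%N by apply: blocked_reset_card.
have S_ge : (r - U <= #|deck :\: B0|)%N.
  by rewrite cardsD; have := subset_leq_card (subsetIr deck B0); lia.
apply: le_trans (epoch_potential_turn R U_lt_window r_in).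
by rewrite lerD2r lef_pV2 ?posrE ?ltr0n ?ler_nat //; lia.
Qed.

End PlayBound.

Theorem mainTheorem15 (R : realType) (n : nat) (G : guesser R n)
  (HG : is_guesser G) (i : nat) (Hi : (1 <= i <= dN R n)%N) :
  expected_correct_in_epoch G i <= ln (lg R n + 3).
Proof.
have [lg_ge7 k_ge] := epoch_lg_bounds Hi.
have lg_ge1 : 1 <= lg R n by apply: le_trans lg_ge7; rewrite ler1n.
have [U_lt ratio] : (uN R n i < kN R n i - lN R n i)%N /\
    (kN R n i - uN R n i)%:R <= (lg R n + 3) * (kN R n i - lN R n i - uN R n i)%:R
  := epoch_truncn_bounds (l := l_real R n i) (u := u_real R n i) lg_ge7 k_ge
       (erefl _) (erefl _).
have window r := @epoch_at_window R n lg_ge1 i r Hi.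
apply: le_trans (play_le_potential HG U_lt window n [::] _) _.
  by move=> _; rewrite cards0.
apply: le_trans (epoch_potential_le R U_lt _) _.
by apply: ln_sub_le ratio; rewrite ltr0n; clear -U_lt; lia.
Qed.
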